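(* Let $q$ be odd, $V$ an $n$-dimensional space over $\mathbb{F}_q$, $n\ge4$, $G$ one of $\mathrm{SL}(V),\mathrm{Sp}(V),\mathrm{SU}(V)$, $\mathcal T$ the set of transvections of $G$, and $X\subseteq\mathcal T$ a generating set of $G$ satisfying: (P2) ${}_VX$ spans $V$, $X_{V^*}$ spans $V^*$, $\Gamma(X)$ strongly connected; (P3) the weights of all cycles of $\Gamma(X)$ generate $\mathbb{F}_q$; (P4) if $G=\mathrm{Sp}(V)$ every cycle of $\Gamma(\mathcal T)$ is symplectic; (P5) if $G=\mathrm{SL}(V)$ and $q$ is a square, $\Gamma(X)$ contains a non-unitary cycle; (P6) the directed diameter of $\Gamma(X'')$ is at most $2$ for every $X\subseteq X''\subseteq\mathcal T$; (P7) the two-way diameter of $\Gamma(X'')$ is at most $6$ for every $X\subseteq X''\subseteq \mathcal T$. For $k\ge2$ let $L_k=L_k(X)$ be the subfield of $\mathbb{F}_q$ generated by the weights of the cycles of $\Gamma(X)$ of length at most $k$. Assume $k\ge 3$ is an integer with $L_{k-1}\ne L_k$. Then (1) $k\in\{3,4,5\}$; (2) if $k\in\{4,5\}$ and $(r_1,\dots,r_k)$ is a cycle of $\Gamma(X)$ whose weight is not in $L_{k-1}$, then there is an index $i$, $1\le i\le k$, such that $[r_i,r_{i+2}]$ is not an edge of $\Gamma(X)$ (indices mod $k$).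
   Context: Transvections $s=1+u_s\otimes\phi_s$ ($x\mapsto x+\phi_s(x)u_s$). $\Gamma(Y)$: directed graph on $Y$ with edge $[s,t]$ iff $\phi_t(u_s)\ne0$; two-way edges/paths/diameter as usual (both directions are edges). Weight of $(r_1,\dots,r_k)$: $w=\prod_{i=1}^k\phi_{r_{i+1}}(u_{r_i})$ (indices mod $k$); a $k$-tuple with nonzero weight is a cycle of length $k$. Symplectic: $w(r_1,\dots,r_k)+(-1)^{k+1}w(r_k,\dots,r_1)=0$; unitary: $w(r_1,\dots,r_k)+(-1)^{k+1}w(r_k,\dots,r_1)^{\sqrt q}=0$. ${}_VX$, $X_{V^*}$: the sets of $u_s$, resp. $\phi_s$, for $s\in X$. *)

From HB Require Import structures.
From mathcomp Require Import all_boot all_order all_algebra all_field.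
Set Implicit Arguments. Unset Strict Implicit. Unset Printing Implicit Defensive.
Import GRing.Theory.
Local Open Scope ring_scope.

(* Conventions: V = 'rV[F]_n (row vectors), V^* = 'cV[F]_n (column vectors),
   phi(x) = (x *m phi) 0 0.  Linear maps act on the right: x |-> x *m g.
   The transvection 1 + u (x) phi  (x |-> x + phi(x) u) is the matrix
   1%:M + phi *m u. *)

Section Defs.
Variables (F : finFieldType) (n : nat).
Local Notation M := 'M[F]_n.

Definition ev (phi : 'cV[F]_n) (x : 'rV[F]_n) : F := (x *m phi) 0 0.

Definition tv_pair (t : M) (p : 'rV[F]_n * 'cV[F]_n) : bool :=
  [&& p.1 != 0, p.2 != 0, ev p.2 p.1 == 0 & t == 1%:M + p.2 *m p.1].

Definition is_transvection (t : M) : Prop := exists p, tv_pair t p.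

(* a chosen representative (u_s, phi_s); weights and edges do not depend on it *)
Definition tv_u (t : M) : 'rV[F]_n :=
  if [pick p | tv_pair t p] is Some p then p.1 else 0.
Definition tv_phi (t : M) : 'cV[F]_n :=
  if [pick p | tv_pair t p] is Some p then p.2 else 0.

Definition tedge : rel M := fun s t => ev (tv_phi t) (tv_u s) != 0.

Definition weight (r : seq M) : F :=
  \prod_(i < size r)
     ev (tv_phi (nth 1%:M r (i.+1 %% size r))) (tv_u (nth 1%:M r i)).

Definition is_cycle (Y : M -> Prop) (r : seq M) : Prop :=
  (0 < size r)%N /\ (forall s, s \in r -> Y s) /\ weight r != 0.

Definition edge_of (Y : M -> Prop) (s t : M) : Prop := Y s /\ Y t /\ tedge s t.

Definition twoway : rel M := fun s t => tedge s t && tedge t s.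

Definition path_le (e : rel M) (Y : M -> Prop) (m : nat) (s t : M) : Prop :=
  exists p : seq M, (forall x, x \in p -> Y x) /\ (size p <= m)%N /\
    path e s p /\ last s p = t.

Definition strongly_connected (Y : M -> Prop) : Prop :=
  forall s t, Y s -> Y t -> exists m, path_le tedge Y m s t.

Definition diam_le (Y : M -> Prop) (m : nat) : Prop :=
  forall s t, Y s -> Y t -> path_le tedge Y m s t.

Definition twoway_diam_le (Y : M -> Prop) (m : nat) : Prop :=
  forall s t, Y s -> Y t -> path_le twoway Y m s t.

Definition symplectic_cycle (r : seq M) : Prop :=
  weight r + (-1) ^+ (size r).+1 * weight (rev r) = 0.

Definition unitary_cycle (r : seq M) : Prop :=
  forall q0 : nat, (q0 ^ 2 = #|F|)%N ->
    weight r + (-1) ^+ (size r).+1 * (weight (rev r)) ^+ q0 = 0.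

Definition is_square_order : Prop := exists q0 : nat, (q0 ^ 2 = #|F|)%N.

Definition is_subfield (K : {set F}) : Prop :=
  [/\ 0 \in K, 1 \in K, (forall x y, x \in K -> y \in K -> x - y \in K),
      (forall x y, x \in K -> y \in K -> x * y \in K) &
      (forall x, x \in K -> x^-1 \in K)].

Definition gen_field (P : F -> Prop) (x : F) : Prop :=
  forall K : {set F}, is_subfield K -> (forall y, P y -> y \in K) -> x \in K.

Definition Lk (Y : M -> Prop) (k : nat) : F -> Prop :=
  gen_field (fun y => exists r, is_cycle Y r /\ (size r <= k)%N /\ y = weight r).

Definition spans_V (X : {set M}) : Prop :=
  forall x : 'rV[F]_n, exists c : M -> F, x = \sum_(s in X) c s *: tv_u s.
Definition spans_Vdual (X : {set M}) : Prop :=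
  forall x : 'cV[F]_n, exists c : M -> F, x = \sum_(s in X) c s *: tv_phi s.

Inductive gen_grp (X : {set M}) : M -> Prop :=
| gen_one : gen_grp X 1%:M
| gen_in x : x \in X -> gen_grp X x
| gen_mul a b : gen_grp X a -> gen_grp X b -> gen_grp X (a *m b)
| gen_inv a : gen_grp X a -> gen_grp X (invmx a).

Inductive gkind := KSL | KSp | KSU.

(* the form B defining the group: for KSp a nondegenerate alternating form
   beta(x,y) = x B y^T; for KSU (q = q0^2) a nondegenerate hermitian form
   beta(x,y) = x B sigma(y)^T with sigma(a) = a^q0. *)
Definition form_ok (K : gkind) (B : M) : Prop :=
  match K with
  | KSL => True
  | KSp => B^T = - B /\ (forall i, B i i = 0) /\ \det B != 0
  | KSU => is_square_order /\ \det B != 0 /\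
           (forall q0 : nat, (q0 ^ 2 = #|F|)%N -> B^T = map_mx (fun a => a ^+ q0) B)
  end.

Definition in_group (K : gkind) (B : M) (g : M) : Prop :=
  match K with
  | KSL => \det g = 1
  | KSp => g *m B *m g^T = B
  | KSU => \det g = 1 /\
           (forall q0 : nat, (q0 ^ 2 = #|F|)%N ->
              g *m B *m (map_mx (fun a => a ^+ q0) g)^T = B)
  end.

Definition in_T (K : gkind) (B : M) (t : M) : Prop :=
  in_group K B t /\ is_transvection t.

End Defs.

From mathcomp Require Import all_boot all_order all_algebra all_field.
From mathcomp Require Import ring zify.
From Stdlib Require Import Classical.
Import GRing.Theory.
Local Open Scope ring_scope.
Set Implicit Arguments. Unset Strict Implicit.

(* Split a closed walk at two of its vertices x, y into an arc a from x to y
   and an arc b back; if c and d are further walks from x to y and from y to x,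
   then w(ab) = w(ad) w(cb) / w(cd).  So w(ab) lies in every subfield containing
   the weights of the closed walks ad, cb and cd.  For a cycle of length k >= 6,
   take x = r_1, y = r_4 and c, d of length at most 2 given by (P6): all three
   walks are shorter than k, hence L_k = L_(k-1).  For k = 4 (resp. 5), if all
   the chords [r_i, r_(i+2)] are edges, the chords r_1 r_3 and r_3 r_1 (resp.
   r_1 r_3 and r_3 r_5) do the same job, so the weight lies in L_(k-1).
   Only (P6) is needed. *)

Lemma subfield_cross (F : finFieldType) (K : {set F}) (a b c d : F) :
  is_subfield K -> c * d != 0 ->
  a * d \in K -> c * b \in K -> c * d \in K -> a * b \in K.
Proof.
move=> [_ _ _ mulK invK]; rewrite mulf_eq0 negb_or => /andP[c0 d0] adK cbK cdK.
have -> : a * b = a * d * (c * b) * (c * d)^-1 by field; rewrite c0 d0.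
by rewrite mulK ?invK // mulK.
Qed.

Section WalkWeights.
Variables (F : finFieldType) (n : nat).
Local Notation M := 'M[F]_n.

Definition edge_weight (s t : M) : F := ev (tv_phi t) (tv_u s).

Fixpoint path_weight (x : M) (p : seq M) : F :=
  if p is y :: p' then edge_weight x y * path_weight y p' else 1.

Lemma path_weight_cat x p1 p2 :
  path_weight x (p1 ++ p2) = path_weight x p1 * path_weight (last x p1) p2.
Proof. by elim: p1 x => [|y p IHp] x /=; rewrite ?mul1r // IHp mulrA. Qed.

Lemma path_weight_neq0 x p : (path_weight x p != 0) = path (@tedge F n) x p.
Proof. by elim: p x => [|y p IHp] x /=; rewrite ?oner_eq0 // mulf_eq0 negb_or IHp. Qed.

Lemma path_weightE x p :
  path_weight x p = \prod_(i < size p) edge_weight (nth 1%:M (x :: p) i) (nth 1%:M p i).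
Proof. by elim: p x => [|y p IHp] x /=; rewrite ?big_ord0 // big_ord_recl IHp. Qed.

Lemma weight_cons x s : weight (x :: s) = path_weight x (rcons s x).
Proof.
rewrite /weight /= big_ord_recr /= modnn -cats1 path_weight_cat /= mulr1.
rewrite -(last_nth 1%:M) path_weightE; congr (_ * _).
by apply: eq_bigr => i _; rewrite modn_small ?ltnS.
Qed.

Lemma cycle_path (Y : M -> Prop) x s :
  is_cycle Y (x :: s) -> path (@tedge F n) x (rcons s x).
Proof. by case=> _ [_]; rewrite weight_cons path_weight_neq0. Qed.

Definition cycle_weights_in (Y : M -> Prop) (m : nat) (K : {set F}) : Prop :=
  forall r, is_cycle Y r -> (size r <= m)%N -> weight r \in K.

Lemma LkP (Y : M -> Prop) m x :
  Lk Y m x <-> (forall K, is_subfield K -> cycle_weights_in Y m K -> x \in K).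
Proof.
split=> Lx K subK.
  by move=> shortK; apply: Lx => // _ [r [cyc [sz ->]]]; apply: shortK.
by move=> shortK; apply: Lx => // r cyc sz; apply: shortK; exists r.
Qed.

Lemma Lk_succ (Y : M -> Prop) m :
  (forall K, is_subfield K -> cycle_weights_in Y m K -> cycle_weights_in Y m.+1 K) ->
  forall x, Lk Y m x <-> Lk Y m.+1 x.
Proof.
move=> extend x; rewrite !LkP; split=> Lx K subK shortK.
  by apply: Lx => // r cyc sz; apply: shortK; rewrite // ltnW.
exact: Lx (extend K subK shortK).
Qed.

Section ChordSplitting.
Variables (Y : M -> Prop) (K : {set F}) (m : nat).
Hypotheses (subK : is_subfield K) (shortK : cycle_weights_in Y m K).

Lemma closed_walk_weight_in x w :
  last x w = x -> {in w, forall s, Y s} -> path_weight x w != 0 ->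
  (size w <= m)%N -> path_weight x w \in K.
Proof.
case/lastP: w => [|s z]; first by case: subK.
rewrite last_rcons => -> Yw w0 sz; rewrite -weight_cons.
apply: shortK; last by rewrite /= -(size_rcons s x).
split=> //; split; last by rewrite weight_cons.
by move=> t t_in; apply: Yw; rewrite mem_rcons.
Qed.

Lemma chord_split x y a b c d :
  last x a = y -> last y b = x -> last x c = y -> last y d = x ->
  {in a ++ b, forall s, Y s} -> {in c ++ d, forall s, Y s} ->
  path_weight x (a ++ b) != 0 -> path_weight x c != 0 -> path_weight y d != 0 ->
  (size a + size d <= m)%N -> (size c + size b <= m)%N -> (size c + size d <= m)%N ->
  path_weight x (a ++ b) \in K.
Proof.
move=> xa yb xc yd Yab Ycd ab0 c0 d0 ad_m cb_m cd_m.
have walk_in u v : last x u = y -> last y v = x -> {in u ++ v, forall s, Y s} ->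
    path_weight x u * path_weight y v != 0 -> (size u + size v <= m)%N ->
    path_weight x u * path_weight y v \in K.
  move=> xu yv uv uv0 uv_m; rewrite -xu -path_weight_cat.
  apply: closed_walk_weight_in; rewrite ?last_cat ?xu ?size_cat ?path_weight_cat ?xu //.
move: ab0; rewrite !path_weight_cat xa mulf_eq0 negb_or => /andP[a0 b0].
apply: (subfield_cross subK (c := path_weight x c) (d := path_weight y d)).
- by rewrite mulf_neq0.
- apply: walk_in; rewrite ?mulf_neq0 // => s; rewrite mem_cat => /orP[sa|sd].
    by apply: Yab; rewrite mem_cat sa.
  by apply: Ycd; rewrite mem_cat sd orbT.
- apply: walk_in; rewrite ?mulf_neq0 // => s; rewrite mem_cat => /orP[sc|sb].
    by apply: Ycd; rewrite mem_cat sc.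
  by apply: Yab; rewrite mem_cat sb orbT.
- by apply: walk_in; rewrite ?mulf_neq0.
Qed.

Lemma cycle_sub_in r s : is_cycle Y r -> all (mem r) s -> {in s, forall t, Y t}.
Proof. by case=> _ [Yr _] /allP rs t /rs; apply: Yr. Qed.

Lemma long_cycle_weight_in r :
  diam_le Y 2 -> (5 <= m)%N -> is_cycle Y r -> size r = m.+1 -> weight r \in K.
Proof.
move=> diamY m_ge5.
case: r => [|r1 [|r2 [|r3 [|r4 t]]]] cyc sz_r; try by move: sz_r => /=; lia.
have Y_r : {in rcons [:: r2, r3, r4 & t] r1, forall s, Y s}.
  by move=> s; rewrite mem_rcons; case: cyc => _ [Yr _]; apply: Yr.
have Y1 : Y r1 by apply: Y_r; rewrite mem_rcons mem_head.
have Y4 : Y r4 by apply: Y_r; rewrite !inE eqxx !orbT.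
have [p [Yp [sz_p [path_p last_p]]]] := diamY r1 r4 Y1 Y4.
have [q [Yq [sz_q [path_q last_q]]]] := diamY r4 r1 Y4 Y1.
rewrite weight_cons.
apply: (@chord_split r1 r4 [:: r2; r3; r4] (rcons t r1) p q).
- by [].
- by rewrite last_rcons.
- by [].
- by [].
- exact: Y_r.
- by move=> s; rewrite mem_cat => /orP[/Yp|/Yq].
- by case: cyc => _ [_]; rewrite weight_cons.
- by rewrite path_weight_neq0.
- by rewrite path_weight_neq0.
- by move: sz_r => /=; lia.
- by move: sz_r => /=; rewrite size_rcons; lia.
- exact: leq_trans (leq_add sz_p sz_q) (ltnW m_ge5).
Qed.

Lemma chord4_weight_in (r1 r2 r3 r4 : M) :
  (3 <= m)%N -> is_cycle Y [:: r1; r2; r3; r4] -> tedge r1 r3 -> tedge r3 r1 ->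
  weight [:: r1; r2; r3; r4] \in K.
Proof.
move=> m_ge3 cyc e13 e31; rewrite weight_cons.
apply: (@chord_split r1 r3 [:: r2; r3] [:: r4; r1] [:: r3] [:: r1]) => //.
- by apply: (cycle_sub_in cyc); rewrite /= !inE !eqxx !orbT.
- by apply: (cycle_sub_in cyc); rewrite /= !inE !eqxx !orbT.
- by case: cyc => _ [_]; rewrite weight_cons.
- by rewrite path_weight_neq0 /= e13.
- by rewrite path_weight_neq0 /= e31.
- exact: ltnW m_ge3.
Qed.

Lemma chord5_weight_in (r1 r2 r3 r4 r5 : M) :
  (4 <= m)%N -> is_cycle Y [:: r1; r2; r3; r4; r5] -> tedge r1 r3 -> tedge r3 r5 ->
  weight [:: r1; r2; r3; r4; r5] \in K.
Proof.
move=> m_ge4 cyc e13 e35; rewrite weight_cons.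
apply: (@chord_split r1 r3 [:: r2; r3] [:: r4; r5; r1] [:: r3] [:: r5; r1]) => //.
- by apply: (cycle_sub_in cyc); rewrite /= !inE !eqxx !orbT.
- by apply: (cycle_sub_in cyc); rewrite /= !inE !eqxx !orbT.
- by case: cyc => _ [_]; rewrite weight_cons.
- by rewrite path_weight_neq0 /= e13.
- have /and5P[_ _ _ _ /andP[e51 _]] := cycle_path cyc.
  by rewrite path_weight_neq0 /= e35 e51.
- exact: ltnW m_ge4.
Qed.

End ChordSplitting.
End WalkWeights.

Theorem lemma4p3 (F : finFieldType) (n : nat) (K : gkind) (B : 'M[F]_n)
  (X : {set 'M[F]_n}) (k : nat) :
  odd #|F| -> (4 <= n)%N -> form_ok K B ->
  (* X is a set of transvections of G generating G *)
  (forall x, x \in X -> in_T K B x) ->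
  (forall g, in_group K B g <-> gen_grp X g) ->
  (* (P2) *)
  spans_V X -> spans_Vdual X -> strongly_connected (fun s => s \in X) ->
  (* (P3) *)
  (forall x : F, gen_field (fun y => exists r, is_cycle (fun s => s \in X) r /\ y = weight r) x) ->
  (* (P4) *)
  (K = KSp -> forall r, is_cycle (in_T K B) r -> symplectic_cycle r) ->
  (* (P5) *)
  (K = KSL -> is_square_order F ->
     exists r, is_cycle (fun s => s \in X) r /\ ~ unitary_cycle r) ->
  (* (P6), (P7) *)
  (forall X'' : {set 'M[F]_n}, X \subset X'' -> (forall t, t \in X'' -> in_T K B t) ->
     diam_le (fun s => s \in X'') 2 /\ twoway_diam_le (fun s => s \in X'') 6) ->
  (3 <= k)%N ->
  ~ (forall x, Lk (fun s => s \in X) k.-1 x <-> Lk (fun s => s \in X) k x) ->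
  (k \in [:: 3; 4; 5]%N) /\
  ((k \in [:: 4; 5]%N) ->
   forall r : seq 'M[F]_n, size r = k -> is_cycle (fun s => s \in X) r ->
     ~ Lk (fun s => s \in X) k.-1 (weight r) ->
     exists i : 'I_k,
       ~ edge_of (fun s => s \in X) (nth 1%:M r i) (nth 1%:M r ((i + 2) %% k))).
Proof.
move=> _ _ _ X_T _ _ _ _ _ _ _ P6 k_ge3 Lk_neq.
have diamX := (P6 X (subxx X) X_T).1.
split.
  case: (ltnP k 6) => [k_lt6 | k_ge6]; first by rewrite !inE; lia.
  case: k k_ge3 k_ge6 Lk_neq => // m _ m_ge5 Lk_neq; case: Lk_neq.
  apply: Lk_succ => L subL shortL r cyc.
  rewrite leq_eqVlt ltnS => /orP[/eqP sz_r | sz_r]; last exact: shortL.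
  exact: long_cycle_weight_in diamX m_ge5 cyc sz_r.
move=> k45 r sz_r cyc Lr; apply: not_all_ex_not => chords; apply: Lr.
apply/LkP => L subL shortL.
move: k45 sz_r chords shortL; rewrite !inE => /orP[]/eqP ->.
  case: r cyc => [|r1 [|r2 [|r3 [|r4 []]]]] // cyc _ chords shortL.
  have [_ [_ e13]] : edge_of _ r1 r3 := chords (@Ordinal 4 0 isT).
  have [_ [_ e31]] : edge_of _ r3 r1 := chords (@Ordinal 4 2 isT).
  exact: (chord4_weight_in subL shortL _ cyc e13 e31).
case: r cyc => [|r1 [|r2 [|r3 [|r4 [|r5 []]]]]] // cyc _ chords shortL.
have [_ [_ e13]] : edge_of _ r1 r3 := chords (@Ordinal 5 0 isT).
have [_ [_ e35]] : edge_of _ r3 r5 := chords (@Ordinal 5 2 isT).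
exact: (chord5_weight_in subL shortL _ cyc e13 e35).
Qed.
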